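(* Let $f=\frac1n\sum_{i=1}^n f_i$ where each $f_i:\mathbb{R}^d\to\mathbb{R}$ is differentiable, bounded from below by $f_i^{\mathrm{inf}}$, and $L_i$-smooth in the sense that $f_i(y)\le f_i(x)+\langle\nabla f_i(x),y-x\rangle+\frac{L_i}{2}\|y-x\|^2$ for all $x,y$. Let $f^{\mathrm{inf}}=\inf_x f(x)$ and $\Delta^{\mathrm{inf}}=\frac1n\sum_{i=1}^n (f^{\mathrm{inf}}-f_i^{\mathrm{inf}})$. Let $v=(v_1,\dots,v_n)$ be a random vector with $\mathbb{E}[v_i]=1$ and $\mathbb{E}[v_i^2]<\infty$ for all $i$, and define $g(x)=\frac1n\sum_{i=1}^n v_i\nabla f_i(x)$. Then $\Delta^{\mathrm{inf}}\ge 0$ and for all $x\in\mathbb{R}^d$, $$\mathbb{E}\|g(x)\|^2\le 2A\,(f(x)-f^{\mathrm{inf}})+B\|\nabla f(x)\|^2+C$$ with $A=\max_i L_i\mathbb{E}[v_i^2]$, $B=0$, $C=2A\Delta^{\mathrm{inf}}$. *)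

From HB Require Import structures.
From mathcomp Require Import all_boot all_order all_algebra.
From mathcomp Require Import all_classical all_reals all_analysis.
Set Implicit Arguments. Unset Strict Implicit. Unset Printing Implicit Defensive.
Import Order.TTheory GRing.Theory Num.Theory.
Import numFieldNormedType.Exports.
Local Open Scope ring_scope.

Definition dotp (R : realType) (d : nat) (u w : 'rV[R]_d) : R :=
  \sum_(j < d) u 0 j * w 0 j.
Definition sqnorm (R : realType) (d : nat) (u : 'rV[R]_d) : R := dotp u u.

Definition grad (R : realType) (d : nat) (h : 'rV[R]_d -> R) (x : 'rV[R]_d)
  : 'rV[R]_d := \row_(j < d) ('D_(delta_mx 0 j) h x).

Definition Lsmooth (R : realType) (d : nat) (L : R) (h : 'rV[R]_d -> R) :=
  forall x y, h y <= h x + dotp (grad h x) (y - x) + L / 2 * sqnorm (y - x).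

Definition finf (R : realType) (d : nat) (h : 'rV[R]_d -> R) : R :=
  inf (range h).

From HB Require Import structures.
From mathcomp Require Import all_boot all_order all_algebra.
From mathcomp Require Import all_classical all_reals all_analysis.
From mathcomp Require Import ring lra measurable_realfun.
Set Implicit Arguments. Unset Strict Implicit. Unset Printing Implicit Defensive.
Import Order.TTheory GRing.Theory Num.Theory.
Import numFieldNormedType.Exports.
Local Open Scope ring_scope.

(* Applying L-smoothness of h along x + t u and bounding h below by inf h
   makes a quadratic in t nonnegative; its discriminant gives
   ||grad h x||^2 <= 2 L (h x - inf h).  Cauchy-Schwarz bounds ||g(x)||^2 by
   n^-1 sum_i v_i^2 ||grad f_i x||^2, whose expectation is at most
   n^-1 sum_i 2 A (f_i x - inf f_i) = 2 A (f x - inf f) + 2 A Delta. *)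

Lemma quadratic_ge0_discr (R : rcfType) (a b c : R) :
  (forall t, 0 <= a * t ^+ 2 + b * t + c) -> b ^+ 2 <= 4 * a * c.
Proof.
move=> ge0; rewrite -subr_le0.
have := @deg_le2_poly_ge0 R (Poly [:: c; b; a]) (size_Poly _).
rewrite !coef_Poly /=; apply=> t.
rewrite !horner_cons hornerC.
by have := ge0 t; lra.
Qed.

Lemma sqr_sum_le (R : realFieldType) n (b : 'I_n -> R) :
  (\sum_i b i) ^+ 2 <= n%:R * \sum_i b i ^+ 2.
Proof.
case: n b => [|n] b; first by rewrite !big_ord0 expr0n mul0r.
set s := \sum_i b i.
have dev : \sum_i (n.+1%:R * b i - s) ^+ 2 = n.+1%:R * (n.+1%:R * \sum_i b i ^+ 2 - s ^+ 2).
  rewrite (eq_bigr (fun i => n.+1%:R ^+ 2 * b i ^+ 2 - 2 * n.+1%:R * s * b i + s ^+ 2));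
    last by move=> i _; ring.
  rewrite big_split sumrB /= -!mulr_sumr -/s sumr_const card_ord; ring.
have : 0 <= \sum_i (n.+1%:R * b i - s) ^+ 2 by apply: sumr_ge0 => i _; exact: sqr_ge0.
by rewrite dev pmulr_rge0 ?ltr0Sn // subr_ge0.
Qed.

Section SquaredNorm.
Variables (R : realType) (d : nat).
Implicit Types (u w : 'rV[R]_d).

Lemma dotpZr u w t : dotp u (t *: w) = t * dotp u w.
Proof. by rewrite /dotp mulr_sumr; apply: eq_bigr => j _; rewrite mxE; ring. Qed.

Lemma sqnormZ w t : sqnorm (t *: w) = t ^+ 2 * sqnorm w.
Proof. by rewrite /sqnorm /dotp mulr_sumr; apply: eq_bigr => j _; rewrite mxE; ring. Qed.

Lemma sqnorm_ge0 w : 0 <= sqnorm w.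
Proof. by apply: sumr_ge0 => j _; rewrite -expr2 sqr_ge0. Qed.

Lemma sqnorm_delta (j : 'I_d) : sqnorm (delta_mx 0 j : 'rV[R]_d) = 1.
Proof.
rewrite /sqnorm /dotp (bigD1 j) //= big1 ?addr0 => [|k /negbTE kj].
  by rewrite mxE !eqxx mulr1.
by rewrite mxE kj andbF mul0r.
Qed.

Lemma sqnorm_sum_le n (u : 'I_n -> 'rV[R]_d) :
  sqnorm (\sum_i u i) <= n%:R * \sum_i sqnorm (u i).
Proof.
rewrite /sqnorm /dotp exchange_big mulr_sumr /=; apply: ler_sum => j _.
rewrite summxE -expr2.
under [X in _ <= _ * X]eq_bigr => i _ do rewrite -expr2.
exact: sqr_sum_le.
Qed.

Lemma sqnorm_wmean_le n (a : 'I_n -> R) (G : 'I_n -> 'rV[R]_d) :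
  sqnorm (n%:R^-1 *: \sum_i (a i *: G i)) <= n%:R^-1 * \sum_i a i ^+ 2 * sqnorm (G i).
Proof.
have invn2_natr : n%:R^-1 ^+ 2 * n%:R = n%:R^-1 :> R.
  by case: n {a G} => [|n]; [rewrite invr0 expr0n mul0r | field].
rewrite sqnormZ; apply: le_trans (ler_wpM2l (sqr_ge0 _) (sqnorm_sum_le _)) _.
by under eq_bigr => i _ do rewrite sqnormZ; rewrite mulrA invn2_natr.
Qed.

End SquaredNorm.

Section SmoothLowerBounded.
Variables (R : realType) (d : nat) (L : R) (h : 'rV[R]_d -> R).
Hypotheses (h_smooth : Lsmooth L h) (h_lbound : has_lbound (range h)).

Lemma finf_le x : finf h <= h x.
Proof. by apply: ge_inf => //; exists x. Qed.

Lemma sqr_dotp_grad_le x u :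
  dotp (grad h x) u ^+ 2 <= 2 * L * sqnorm u * (h x - finf h).
Proof.
rewrite [X in _ <= X](_ : _ = 4 * (L / 2 * sqnorm u) * (h x - finf h)); last by field.
apply: quadratic_ge0_discr => t.
have := h_smooth x (x + t *: u); rewrite [x + _ - x]addrC addKr dotpZr sqnormZ.
have := finf_le (x + t *: u); lra.
Qed.

Lemma sqnorm_grad_le x : sqnorm (grad h x) <= 2 * L * (h x - finf h).
Proof.
set s := sqnorm (grad h x).
(* Needed when grad h x = 0: use a unit vector, or the constancy of h if d = 0. *)
have hL : 0 <= 2 * L * (h x - finf h).
  have [d0|d_gt0] := posnP d.
    have all_x y : y = x by apply/rowP => j; move: (ltn_ord j); rewrite {2}d0.
    rewrite /finf (_ : range h = [set h x]%classic) ?inf1 ?subrr ?mulr0 //.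
    by apply/seteqP; split=> [_ [y _ <-]|_ ->]; [rewrite (all_x y) | exists x].
  have := sqr_dotp_grad_le x (delta_mx 0 (Ordinal d_gt0)).
  by rewrite sqnorm_delta mulr1; apply: le_trans; exact: sqr_ge0.
have := sqr_dotp_grad_le x (grad h x); rewrite -/(sqnorm _) -/s.
have := sqnorm_ge0 (grad h x); rewrite -/s.
nra.
Qed.

End SmoothLowerBounded.

Section SecondMoments.
Context (dm : measure_display) (Omega : measurableType dm) (R : realType).
Variable P : probability Omega R.
Local Open Scope ereal_scope.

Lemma sqr_Lfun1 (X : {RV P >-> R}) :
  'E_P[fun w => (X w ^+ 2)%R] < +oo -> (fun w => (X w ^+ 2)%R) \in Lfun P 1.
Proof.
move=> fin2; apply/Lfun1_integrable/integrableP; split.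
  by apply/measurable_EFinP; exact: measurable_funX.
move: fin2; rewrite unlock; congr (_ < _); apply: eq_integral => w _.
by rewrite /= ger0_norm // sqr_ge0.
Qed.

Lemma expectation_lincomb n (c : 'I_n -> R) (X : 'I_n -> Omega -> R) :
  (forall i, X i \in Lfun P 1) ->
  'E_P[fun w => \sum_i c i * X i w]%R = \sum_i (c i)%:E * 'E_P[X i].
Proof.
move=> XL; rewrite unlock.
under eq_integral => w _ do (rewrite -sumEFin; under eq_bigr => i _ do rewrite EFinM).
rewrite integral_sum //; last by move=> i; exact/integrableZl/Lfun1_integrable.
by apply: eq_bigr => i _; rewrite -integralZl //; exact/Lfun1_integrable.
Qed.

Lemma expectation_sqnorm_wmean_le d n (v : 'I_n -> {RV P >-> R})
    (G : 'I_n -> 'rV[R]_d) :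
  (forall i, 'E_P[fun w => (v i w ^+ 2)%R] < +oo) ->
  'E_P[fun w => sqnorm (n%:R^-1 *: \sum_i (v i w *: G i))] <=
  (n%:R^-1 * \sum_i fine 'E_P[fun w => (v i w ^+ 2)%R] * sqnorm (G i))%:E.
Proof.
move=> fin2.
pose bound w := (\sum_i (n%:R^-1 * sqnorm (G i)) * v i w ^+ 2)%R.
have coordE w : sqnorm (n%:R^-1 *: \sum_i (v i w *: G i)) =
    (\sum_j (n%:R^-1 * \sum_i v i w * G i 0 j) ^+ 2)%R.
  rewrite /sqnorm /dotp; apply: eq_bigr => j _.
  by rewrite -expr2 !mxE summxE; under eq_bigr => i _ do rewrite mxE.
apply: (@le_trans _ _ 'E_P[bound]).
  apply: expectation_le.
  - rewrite (funext coordE); apply: measurable_sum => j; apply: measurable_funX.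
    apply: measurable_funM => //; apply: measurable_sum => i.
    exact: measurable_funM.
  - apply: measurable_sum => i; apply: measurable_funM => //.
    exact: measurable_funX.
  - by move=> w; exact: sqnorm_ge0.
  - move=> w; apply: sumr_ge0 => i _; apply: mulr_ge0; last exact: sqr_ge0.
    by rewrite mulr_ge0 ?sqnorm_ge0 // invr_ge0.
  - apply: aeW => w; apply: (le_trans (sqnorm_wmean_le _ _)).
    by rewrite /bound mulr_sumr; apply: ler_sum => i _; rewrite mulrA mulrAC.
rewrite expectation_lincomb => [|i]; last exact: sqr_Lfun1.
rewrite mulr_sumr -sumEFin; apply: lee_sum => i _.
have fin_sqr : 'E_P[fun w => (v i w ^+ 2)%R] \is a fin_num.
  by rewrite ge0_fin_numE ?fin2 //; apply: expectation_ge0 => w; exact: sqr_ge0.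
by rewrite -[X in _ * X]fineK // -EFinM lee_fin mulrAC mulrA.
Qed.

End SecondMoments.

Lemma mean_finf_le (R : realType) d n (h : 'I_n -> 'rV[R]_d -> R) :
  (forall i, has_lbound (range (h i))) ->
  n%:R^-1 * \sum_i finf (h i) <= finf (fun x => n%:R^-1 * \sum_i h i x).
Proof.
move=> h_lbound; apply: lb_le_inf; first by exists (n%:R^-1 * \sum_i h i 0), 0.
move=> _ [x _ <-]; rewrite ler_wpM2l ?invr_ge0 //.
by apply: ler_sum => i _; exact: finf_le.
Qed.

Theorem proposition2 (R : realType) (d n : nat) (hn : (0 < n)%N)
  (fi : 'I_n -> 'rV[R]_d -> R) (L : 'I_n -> R)
  (hdiff : forall i x, differentiable (fi i) x)
  (hbdd : forall i, has_lbound (range (fi i)))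
  (hsmooth : forall i, Lsmooth (L i) (fi i))
  (dm : measure_display) (Omega : measurableType dm) (P : probability Omega R)
  (v : 'I_n -> {RV P >-> R})
  (hmean : forall i, ('E_P[v i] = 1)%E)
  (hsecond : forall i, ('E_P[fun w => (v i w ^+ 2)%R] < +oo)%E)
  (A : R)
  (hAmax : (forall i, L i * fine 'E_P[fun w => (v i w ^+ 2)%R] <= A) /\
           exists i, A = L i * fine 'E_P[fun w => (v i w ^+ 2)%R]) :
  let f := fun x => n%:R^-1 * \sum_(i < n) fi i x in
  let Delta := n%:R^-1 * \sum_(i < n) (finf f - finf (fi i)) in
  let g := fun w x => n%:R^-1 *: \sum_(i < n) (v i w *: grad (fi i) x) in
  let B : R := 0 in
  let C := 2 * A * Delta in
  0 <= Delta /\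
  forall x : 'rV[R]_d,
    ('E_P[fun w => sqnorm (g w x)] <=
      (2 * A * (f x - finf f) + B * sqnorm (grad f x) + C)%:E)%E.
Proof.
move=> f Delta g B C.
have DeltaE : Delta = finf f - n%:R^-1 * \sum_i finf (fi i).
  rewrite /Delta sumrB sumr_const card_ord mulrBr -[finf f *+ n]mulr_natr.
  by rewrite mulrCA mulVf ?mulr1 // pnatr_eq0 -lt0n.
split; first by rewrite DeltaE subr_ge0; exact: mean_finf_le.
move=> x; apply: le_trans (expectation_sqnorm_wmean_le (fun i => grad (fi i) x) hsecond) _.
rewrite lee_fin /B mul0r addr0 /C DeltaE.
have -> : 2 * A * (f x - finf f) + 2 * A * (finf f - n%:R^-1 * \sum_i finf (fi i))
    = n%:R^-1 * \sum_i 2 * A * (fi i x - finf (fi i)).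
  by rewrite -mulr_sumr sumrB /f; ring.
rewrite ler_wpM2l ?invr_ge0 //; apply: ler_sum => i _.
have grad_le := sqnorm_grad_le (hsmooth i) (hbdd i) x.
have gap_ge0 : 0 <= fi i x - finf (fi i) by rewrite subr_ge0 finf_le.
have moment_le := hAmax.1 i.
have moment_ge0 : 0 <= fine 'E_P[fun w => (v i w ^+ 2)%R].
  by apply/fine_ge0/expectation_ge0 => w; exact: sqr_ge0.
nra.
Qed.
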